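(* We have \[ H(n, k) = \sum_{v = 0}^{s - t - 1} H_p(d_0, \ldots, d_{t + v + 1})\cdot p^{v - ks + U_p(k)} + O\big(p^{s - t - ks + U_p(k)}\big) . \]
   Context: For integers $n \geq k \geq 1$, $H(n,k) := \sum_{1 \leq i_1 < \cdots < i_k \leq n} \frac{1}{i_1 \cdots i_k}$. Fix a prime $p$. For digits $a_0,\ldots,a_v \in \{0,\ldots,p-1\}$ with $a_0 \neq 0$, write $\langle a_0, \ldots, a_v \rangle_p := \sum_{i=0}^v a_i p^{v-i}$ (base $p$ representation). Let $k = \langle e_0, \ldots, e_t \rangle_p + 1 \geq 2$ and $n = \langle d_0, \ldots, d_s \rangle_p$ with $s \geq t+1$ and $d_i = e_i$ for $i = 0,\ldots,t$. For $a_0,\ldots,a_v \in \{0,\ldots,p-1\}$ put $B_p(a_0,\ldots,a_v) := \langle a_0,\ldots,a_v\rangle_p - \langle a_0,\ldots,a_{v-1}\rangle_p$ (with $\langle a_0,\ldots,a_{v-1}\rangle_p = 0$ if $v=0$), and $\mathcal{B}_p(a_0,\ldots,a_v) := \{c_p(i) : i = 1,\ldots,B_p(a_0,\ldots,a_v)\}$, where $c_p(1) < c_p(2) < \cdots$ is the sequence of all positive integers not divisible by $p$. For $v \geq 0$ let $\mathcal{A}_p(n,v) := \{m \in \{1,\ldots,n\} : \nu_p(m) = s - v\}$. Let $\mathcal{C}_p(n,k) := \bigcup_{v=0}^t \mathcal{A}_p(n,v)$ and $\Pi_p(k) := \prod_{j \in \mathcal{C}_p(n,k)} \frac{1}{j/p^{\nu_p(j)}}$,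 i.e. the product of the reciprocals of the $p$-free parts $j/p^{\nu_p(j)}$ of the elements $j \in \mathcal{C}_p(n,k)$ (this depends only on $p$ and $k$). Put $U_p(k) := \sum_{v=0}^t B_p(e_0,\ldots,e_v)\, v + t + 1$. For $a_0,\ldots,a_{t+v+1} \in \{0,\ldots,p-1\}$ with $v \geq 0$ and $a_i = e_i$ for $i=0,\ldots,t$, set \[ H_p^\prime(a_0,\ldots,a_{t+v}) := \sum_{\substack{0 \leq v_1,\ldots,v_k \leq t+v \\ v_1+\cdots+v_k = U_p(k)+v}} \; \sum_{\substack{j_1/p^{v_1} < \cdots < j_k/p^{v_k} \\ j_1 \in \mathcal{B}_p(a_0,\ldots,a_{v_1}),\ldots, j_k \in \mathcal{B}_p(a_0,\ldots,a_{v_k})}} \frac{1}{j_1\cdots j_k} \] and \[ H_p(a_0,\ldots,a_{t+v+1}) := H_p^\prime(a_0,\ldots,a_{t+v}) + \Pi_p(k) \sum_{j \in \mathcal{B}_p(a_0,\ldots,a_{t+v+1})} \frac{1}{j}. \] $O(p^v)$ denotes a rational number with $p$-adic valuation at least $v$. *)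

From HB Require Import structures.
From mathcomp Require Import all_boot all_order all_algebra.
Set Implicit Arguments. Unset Strict Implicit. Unset Printing Implicit Defensive.
Import Order.TTheory GRing.Theory Num.Theory.
Local Open Scope ring_scope.

(* H(n,k) = sum over k-subsets {i_1<...<i_k} of {1..n} of 1/(i_1...i_k);
   the element i : 'I_n stands for the integer i+1. *)
Definition Hnk (n k : nat) : rat :=
  \sum_(S : {set 'I_n} | #|S| == k) \prod_(i in S) ((i.+1)%:R)^-1.

Definition digval (p : nat) (a : seq nat) : nat :=
  foldl (fun acc x => (acc * p + x)%N) 0%N a.

Definition Bp (p : nat) (a : seq nat) : nat :=
  (digval p a - digval p (take (size a).-1 a))%N.

(* {c_p(1),...,c_p(B)}: the first B positive integers not divisible by p
   (for p >= 2 they all lie in [1, B*p]). *)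
Definition Bset (p B : nat) : seq nat :=
  take B [seq m <- iota 1 (B * p) | ~~ (p %| m)%N].

Definition calB (p : nat) (a : seq nat) : seq nat := Bset p (Bp p a).

Definition Up (p : nat) (es : seq nat) : nat :=
  (\sum_(v < size es) Bp p (take v.+1 es) * v + size es)%N.

(* Pi_p(k) = prod_{j in C_p(n,k)} (j / p^{nu_p(j)})^{-1},
   C_p(n,k) = {m in 1..n : s - t <= nu_p(m) <= s} (union of A_p(n,v), v=0..t) *)
Definition Pip (p n s t : nat) : rat :=
  \prod_(1 <= m < n.+1 | ((s - t <= logn p m) && (logn p m <= s))%N)
     ((m%:R / (p ^ logn p m)%:R)^-1).

(* H'_p(a_0,...,a_{t+v}), a = [a_0;...;a_{t+v}], es = [e_0;...;e_t], k = <es>_p + 1.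
   The tuple (v_1..v_k) ranges over [0, t+v]^k = 'I_(size a)^k, and (j_1..j_k)
   over k-tuples of naturals (bounded by p^(size a + 1), which exceeds every
   element of the sets script B involved) with j_i in script B_p(a_0..a_{v_i}). *)
Definition Hprime (p : nat) (es a : seq nat) : rat :=
  let k := (digval p es).+1 in
  let t := (size es).-1 in
  let v := ((size a).-1 - t)%N in
  \sum_(vv : {ffun 'I_k -> 'I_(size a)} | (\sum_i (vv i : nat) == Up p es + v)%N)
    \sum_(js : {ffun 'I_k -> 'I_(p ^ (size a).+1)} |
            [forall i : 'I_k, (js i : nat) \in calB p (take (vv i).+1 a)] &&
            [forall i : 'I_k, forall j : 'I_k, (i < j)%N ==>
               ((js i)%:R / (p ^ vv i)%:R < (js j)%:R / (p ^ vv j)%:R :> rat)])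
      \prod_i ((js i : nat)%:R)^-1.

Definition Hp (p : nat) (es : seq nat) (n s : nat) (a : seq nat) : rat :=
  Hprime p es (take (size a).-1 a)
  + Pip p n s (size es).-1 * \sum_(j <- calB p a) (j%:R)^-1.

Definition pval (p : nat) (q : rat) : int :=
  (logn p `|numq q|%N)%:Z - (logn p `|denq q|%N)%:Z.

(* q = O(p^e): q has p-adic valuation at least e (q = 0 has valuation +oo) *)
Definition bigOp (p : nat) (e : int) (q : rat) : Prop :=
  q = 0 \/ e <= pval p q.

(* Write each m in [1, n] as m = j p^(s - w) with p not dividing j: w is the
   level of m and j its p-free part.  The integers of level w are exactly the
   j p^(s - w) with j in B_p(d_0, ..., d_w), so a k-subset S of [1, n]
   contributes p^(W(S) - ks) times a p-integral product, W(S) being the sum of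
   its levels.  As k - 1 = |C_p(n, k)| and C_p(n, k) consists of the elements of
   level at most t, an exchange argument shows W(S) >= U_p(k).  For v < s - t,
   the k-subsets of weight U_p(k) + v whose levels stay at most t + v are
   encoded by the tuples summed in H'_p, and the others are C_p(n, k) plus one
   element of level t + v + 1, which gives Pi_p(k) sum 1/j; all k-subsets of
   larger weight together are O(p^(s - t - ks + U_p(k))). *)

From HB Require Import structures.
From mathcomp Require Import all_boot all_order all_algebra.
From mathcomp Require Import zify ring.
Import Order.TTheory GRing.Theory Num.Theory.

Lemma foldl_digval p acc a :
  foldl (fun acc x => (acc * p + x)%N) acc a = (acc * p ^ size a + digval p a)%N.
Proof.
elim: a acc => [|x a IH] acc /=; first by rewrite /digval /= expn0 muln1 addn0.
rewrite /digval /= IH [in RHS]IH expnS; lia.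
Qed.

Lemma digval_cat p a b : digval p (a ++ b) = (digval p a * p ^ size b + digval p b)%N.
Proof. by rewrite /digval foldl_cat foldl_digval. Qed.

Lemma digval_rcons p a x : digval p (rcons a x) = (digval p a * p + x)%N.
Proof. by rewrite -cats1 digval_cat /= expn1 /digval /=. Qed.

Lemma digval_lt p a : all (fun x => x < p)%N a -> (digval p a < p ^ size a)%N.
Proof.
elim/last_ind: a => [|a x IH]; first by rewrite /digval.
rewrite all_rcons => /andP[hx /IH ha]; rewrite digval_rcons size_rcons expnS.
have p_gt0 : (0 < p)%N by case: p hx {ha IH}.
nia.
Qed.

Lemma digval_gt0 p a : (0 < p)%N -> head 0%N a != 0%N -> (0 < digval p a)%N.
Proof.
case: a => [|d a] // p_gt0; rewrite -lt0n => d_gt0.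
rewrite -cat1s digval_cat /digval /= -/(digval p a) add0n.
by rewrite addn_gt0 muln_gt0 d_gt0 expn_gt0 p_gt0.
Qed.

Section CoprimeToP.
Variable p : nat.
Hypothesis p_gt1 : (1 < p)%N.

Lemma count_dvdn_iota N : count (dvdn p) (iota 1 N) = N %/ p.
Proof.
elim: N => [|N IH]; first by rewrite div0n.
rewrite -[N.+1]addn1 iotaD count_cat IH /= addn0 add1n addn1 divnS; last lia.
by case: (p %| N.+1); lia.
Qed.

Lemma count_coprime_iota N : count (predC (dvdn p)) (iota 1 N) = (N - N %/ p)%N.
Proof.
have := count_predC (dvdn p) (iota 1 N); rewrite size_iota count_dvdn_iota.
have := leq_div N p; lia.
Qed.

Lemma Bset_iota D : Bset p (D - D %/ p) = [seq m <- iota 1 D | ~~ (p %| m)].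
Proof.
have hD : (D <= (D - D %/ p) * p)%N by have := leq_divM D p; nia.
rewrite /Bset -{1}(subnKC hD) iotaD filter_cat take_size_cat //.
by rewrite size_filter count_coprime_iota.
Qed.

Lemma size_Bset B : size (Bset p B) = B.
Proof.
rewrite /Bset size_takel // size_filter count_coprime_iota mulnK; nia.
Qed.

End CoprimeToP.

Lemma logn_mul_pexp p j e : prime p -> ~~ (p %| j) -> (0 < j)%N ->
  logn p (j * p ^ e) = e.
Proof.
move=> p_prime hj j_gt0.
by rewrite lognM ?expn_gt0 ?(prime_gt0 p_prime) // pfactorK // logn_coprime ?prime_coprime.
Qed.

Lemma big_split_layers (R : Type) (idx : R) (op : Monoid.com_law idx) (I : finType)
    (P : pred I) (f : I -> nat) (F : I -> R) (U m : nat) :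
  (forall i, P i -> (U <= f i)%N) ->
  \big[op/idx]_(i | P i) F i =
  op (\big[op/idx]_(v < m) \big[op/idx]_(i | P i && (f i == U + v)%N) F i)
     (\big[op/idx]_(i | P i && (U + m <= f i)%N) F i).
Proof.
move=> f_ge; rewrite (bigID (fun i => f i < U + m)%N) /=; congr (op _ _); last first.
  by apply: eq_bigl => i; rewrite -leqNgt.
transitivity (\big[op/idx]_(i | P i && (f i < U + m)%N)
                \big[op/idx]_(v < m | (f i == U + v)%N) F i).
  apply: eq_bigr => i /andP[Pi fi_lt]; have lt_m : (f i - U < m)%N.
    by have := f_ge i Pi; lia.
  rewrite (big_pred1 (Ordinal lt_m)) // => v /=.
  apply/eqP/eqP => [e | ->]; first by apply: val_inj => /=; lia.
  by rewrite /=; have := f_ge i Pi; lia.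
rewrite [LHS](exchange_big_dep xpredT) //=; apply: eq_bigr => v _; apply: eq_bigl => i.
by case: eqP => [->|]; rewrite ?andbF ?andbT // ltn_add2l ltn_ord andbT.
Qed.

Definition increasing {K n} (g : {ffun 'I_K -> 'I_n}) : bool :=
  [forall i : 'I_K, forall j : 'I_K, (i < j)%N ==> (g i < g j)%N].

Section IncreasingMaps.
Variables K n : nat.

Lemma increasingP (g : {ffun 'I_K -> 'I_n}) :
  reflect (forall i j : 'I_K, (i < j)%N -> (g i < g j)%N) (increasing g).
Proof.
apply: (iffP forallP) => [h i j | h i]; first by move/forallP: (h i) => /(_ j)/implyP.
by apply/forallP => j; apply/implyP; apply: h.
Qed.

Lemma increasing_inj (g : {ffun 'I_K -> 'I_n}) : increasing g -> injective g.
Proof.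
move/increasingP=> g_incr i j e; apply: val_inj.
by case: (ltngtP i j) => // /g_incr; rewrite e ltnn.
Qed.

Lemma sorted_enum_set (S : {set 'I_n}) : sorted ltn (map val (enum S)).
Proof.
rewrite sorted_map /enum_mem -enumT.
apply: sorted_filter; first by move=> ? ? ?; apply: ltn_trans.
by rewrite -sorted_map val_enum_ord iota_ltn_sorted.
Qed.

Lemma enum_image_increasing (g : {ffun 'I_K -> 'I_n}) : increasing g ->
  map val (enum [set g i | i : 'I_K]) = [seq val (g i) | i <- enum 'I_K].
Proof.
move/increasingP=> g_incr.
apply: (irr_sorted_eq ltn_trans ltnn (sorted_enum_set _)).
  apply: (homo_sorted (e := relpre val ltn)) => [i j /g_incr //|].
  by rewrite -sorted_map val_enum_ord iota_ltn_sorted.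
move=> x; apply/mapP/mapP => [[_ /[!mem_enum] /imsetP[i _ ->] ->] | [i _ ->]].
  by exists i; rewrite ?mem_enum.
by exists (g i); rewrite // mem_enum imset_f.
Qed.

Lemma increasing_image_inj (g1 g2 : {ffun 'I_K -> 'I_n}) :
  increasing g1 -> increasing g2 ->
  [set g1 i | i : 'I_K] = [set g2 i | i : 'I_K] -> g1 = g2.
Proof.
move=> inc1 inc2 e; apply/ffunP => i; apply: val_inj.
have /eq_in_map eq_val : [seq val (g1 i) | i <- enum 'I_K] = [seq val (g2 i) | i <- enum 'I_K].
  by rewrite -(enum_image_increasing _ inc1) -(enum_image_increasing _ inc2) e.
by apply: eq_val; rewrite mem_enum.
Qed.

Lemma increasing_of_set (S : {set 'I_n}) : #|S| = K ->
  exists2 g, increasing g & [set g i | i : 'I_K] = S.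
Proof.
move=> cardS; pose g := [ffun i : 'I_K => enum_val (cast_ord (esym cardS) i)].
have g_incr : increasing g.
  apply/increasingP => i j lt_ij.
  have x0 := g i; rewrite !ffunE !(enum_val_nth x0).
  have := sorted_enum_set S; rewrite sorted_map => sorted_S.
  apply: (sorted_ltn_nth _ _ sorted_S) => //; first by move=> ? ? ?; apply: ltn_trans.
    by rewrite inE -cardE ltn_ord.
  by rewrite inE -cardE ltn_ord.
exists g => //; apply/eqP; rewrite eqEcard card_imset; last exact: increasing_inj.
rewrite card_ord cardS leqnn andbT; apply/subsetP => _ /imsetP[i _ ->].
by rewrite ffunE enum_valP.
Qed.

Lemma big_card_set_increasing (R : Type) (idx : R) (op : Monoid.com_law idx)
    (P : pred {set 'I_n}) (F : {set 'I_n} -> R) :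
  \big[op/idx]_(S : {set 'I_n} | (#|S| == K) && P S) F S =
  \big[op/idx]_(g | increasing g && P [set g i | i : 'I_K]) F [set g i | i : 'I_K].
Proof.
pose img (g : {ffun 'I_K -> 'I_n}) := [set g i | i : 'I_K].
transitivity (\big[op/idx]_(S in img @: [set g | increasing g && P (img g)]) F S).
  apply: eq_bigl => S; apply/andP/imsetP => [[/eqP cardS PS] | [g]].
    have [g g_incr gS] := increasing_of_set _ cardS.
    by exists g; rewrite // inE g_incr /img gS.
  rewrite inE => /andP[g_incr Pg] ->; split=> //.
  by rewrite card_imset ?card_ord //; apply: increasing_inj.
rewrite big_imset; first by apply: eq_bigl => g; rewrite inE.
by move=> g1 g2; rewrite !inE => /andP[inc1 _] /andP[inc2 _]; apply: increasing_image_inj.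
Qed.

End IncreasingMaps.

Local Open Scope ring_scope.

Lemma ltr_div_expn (p s a b c d : nat) : (0 < p)%N -> (b <= s)%N -> (d <= s)%N ->
  ((a%:R / (p ^ b)%:R : rat) < c%:R / (p ^ d)%:R) = (a * p ^ (s - b) < c * p ^ (s - d))%N.
Proof.
move=> p_gt0 bs ds.
have ps_gt0 : (0 : rat) < (p ^ s)%:R by rewrite ltr0n expn_gt0 p_gt0.
have scale x y : (y <= s)%N -> (x%:R / (p ^ y)%:R : rat) * (p ^ s)%:R = (x * p ^ (s - y))%:R.
  move=> ys; rewrite -{1}(subnK ys) expnD !natrM.
  by field; rewrite pnatr_eq0 -lt0n expn_gt0 p_gt0.
by rewrite -(ltr_pM2r ps_gt0) !scale // ltr_nat.
Qed.

Lemma exprz_natBD (R : fieldType) (x : R) (a b c : nat) : x != 0 ->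
  x ^ (a%:Z - b%:Z + c%:Z) = x ^+ (c + a) / x ^+ b.
Proof.
move=> x_neq0; rewrite expfzDr // expfzDr // -exprz_inv.
by rewrite /exprz exprVn exprD [x ^+ c * _]mulrC mulrAC.
Qed.

Definition p_integral (p : nat) (q : rat) :=
  exists (a : int) (b : nat), ~~ (p %| b)%N /\ q = a%:~R / b%:R.

Section PIntegral.
Variable p : nat.
Hypothesis p_prime : prime p.

Lemma natr_ndvd_neq0 (b : nat) : ~~ (p %| b)%N -> (b%:R : rat) != 0.
Proof. by apply: contraNneq => /eqP; rewrite pnatr_eq0 => /eqP ->; rewrite dvdn0. Qed.

Lemma ndvdn1 : ~~ (p %| 1)%N.
Proof. by rewrite dvdn1; apply: contraTneq p_prime => ->. Qed.

Lemma p_integral_nat (m : nat) : p_integral p m%:R.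
Proof. by exists m, 1%N; rewrite ndvdn1 divr1. Qed.

Lemma p_integral_invn (b : nat) : ~~ (p %| b)%N -> p_integral p (b%:R)^-1.
Proof. by move=> hb; exists 1, b; rewrite div1r. Qed.

Lemma p_integralD q1 q2 : p_integral p q1 -> p_integral p q2 -> p_integral p (q1 + q2).
Proof.
move=> [a1 [b1 [h1 ->]]] [a2 [b2 [h2 ->]]].
exists (a1 * b2%:Z + a2 * b1%:Z), (b1 * b2)%N; rewrite Euclid_dvdM // negb_or h1 h2.
split=> //; rewrite natrM intrD !intrM !pmulrn; field.
by rewrite !natr_ndvd_neq0.
Qed.

Lemma p_integralM q1 q2 : p_integral p q1 -> p_integral p q2 -> p_integral p (q1 * q2).
Proof.
move=> [a1 [b1 [h1 ->]]] [a2 [b2 [h2 ->]]].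
exists (a1 * a2), (b1 * b2)%N; rewrite Euclid_dvdM // negb_or h1 h2.
by split=> //; rewrite natrM intrM invfM; ring.
Qed.

Lemma p_integral_sum (I : finType) (P : pred I) (F : I -> rat) :
  (forall i, P i -> p_integral p (F i)) -> p_integral p (\sum_(i | P i) F i).
Proof.
by move=> hF; apply: big_ind => //; [apply: p_integral_nat 0 | apply: p_integralD].
Qed.

Lemma p_integral_prod (I : finType) (P : pred I) (F : I -> rat) :
  (forall i, P i -> p_integral p (F i)) -> p_integral p (\prod_(i | P i) F i).
Proof.
by move=> hF; apply: big_ind => //; [apply: p_integral_nat 1 | apply: p_integralM].
Qed.

Lemma pval_frac (a : int) (b : nat) : a != 0 -> (0 < b)%N ->
  pval p (a%:~R / b%:R) = (logn p `|a|)%:Z - (logn p b)%:Z.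
Proof.
move=> a_neq0 b_gt0; set q := a%:~R / b%:R.
have b_neq0 : (b%:R : rat) != 0 by rewrite pnatr_eq0 -lt0n.
have q_neq0 : q != 0 by rewrite mulf_neq0 ?invr_eq0 ?intr_eq0.
have num_eq : ((numq q)%:~R : rat) = q * (denq q)%:~R.
  by rewrite -{2}(divq_num_den q) mulfVK // intr_eq0 gt_eqF ?denq_gt0.
have cross : (numq q * b%:Z = a * denq q)%R.
  by apply: (@intr_inj rat); rewrite !intrM num_eq /q pmulrn; field.
have num_gt0 : (0 < `|numq q|)%N by rewrite absz_gt0 numq_eq0.
have den_gt0 : (0 < `|denq q|)%N by rewrite absz_gt0 gt_eqF ?denq_gt0.
have a_gt0 : (0 < `|a|)%N by rewrite absz_gt0.
have := congr1 (logn p \o absz) cross; rewrite /= !abszM !lognM //= /pval.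
lia.
Qed.

Lemma p_integral_bigOp (e : int) (X : rat) (N M : nat) :
  p_integral p X -> e = N%:Z - M%:Z ->
  bigOp p e (X * (p%:R) ^+ N / (p%:R) ^+ M).
Proof.
move=> [a [b [hb ->]]] ->.
have b_gt0 : (0 < b)%N by case: b hb; rewrite ?dvdn0.
have p_gt0 : (0 < p)%N := prime_gt0 p_prime.
have [->|a_neq0] := eqVneq a 0; first by left; rewrite !mul0r.
right; have -> : a%:~R / b%:R * (p%:R : rat) ^+ N / p%:R ^+ M
    = (a * (p ^ N)%N%:Z)%:~R / (b * p ^ M)%:R.
  rewrite intrM !natrM !natrX pmulrn -[((p ^ N)%N%:Z)%:~R]/(((p ^ N)%N)%:R) natrX.
  by field; rewrite natr_ndvd_neq0 // expf_neq0 // pnatr_eq0 -lt0n p_gt0.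
have logn_num : logn p `|a * (p ^ N)%N%:Z| = (logn p `|a| + N)%N.
  by rewrite abszM /= lognM ?absz_gt0 ?expn_gt0 ?p_gt0 // pfactorK.
have logn_den : logn p (b * p ^ M) = M.
  by rewrite lognM ?expn_gt0 ?p_gt0 // pfactorK // logn_coprime ?prime_coprime.
rewrite pval_frac ?logn_num ?logn_den; first lia.
  by rewrite mulf_neq0 // eqz_nat expn_eq0 negb_and -lt0n p_gt0.
by rewrite muln_gt0 b_gt0 expn_gt0 p_gt0.
Qed.

End PIntegral.

Local Close Scope ring_scope.

Section Levels.
Variables (p : nat) (ds : seq nat) (s : nat).
Hypotheses (p_prime : prime p) (size_ds : size ds = s.+1)
  (ds_digits : all (fun x => x < p)%N ds).

Local Notation n := (digval p ds).

Let p_gt0 : (0 < p)%N := prime_gt0 p_prime.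

Definition ntrunc w := digval p (take w.+1 ds).

Lemma n_ntrunc w : (w <= s)%N ->
  n = (ntrunc w * p ^ (s - w) + digval p (drop w.+1 ds))%N.
Proof.
by move=> ws; rewrite /ntrunc -{1}(cat_take_drop w.+1 ds) digval_cat size_drop size_ds.
Qed.

Lemma digval_drop_lt w : (digval p (drop w.+1 ds) < p ^ (s - w))%N.
Proof.
have -> : (s - w = size (drop w.+1 ds))%N by rewrite size_drop size_ds.
by apply: digval_lt; apply/allP => x /mem_drop; apply: (allP ds_digits).
Qed.

Lemma ntrunc_div w : (w <= s)%N -> ntrunc w = n %/ p ^ (s - w).
Proof.
move=> ws; rewrite (n_ntrunc w ws) divnMDl ?expn_gt0 ?p_gt0 //.
by rewrite divn_small ?digval_drop_lt // addn0.
Qed.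

Lemma leq_ntrunc w j : (w <= s)%N -> (j <= ntrunc w)%N = (j * p ^ (s - w) <= n)%N.
Proof. by move=> ws; rewrite ntrunc_div // leq_divRL // expn_gt0 p_gt0. Qed.

Lemma ntrunc_lt w : (w <= s)%N -> (ntrunc w < p ^ w.+1)%N.
Proof.
move=> ws; have := @digval_lt p (take w.+1 ds); rewrite size_takel ?size_ds //.
by apply; apply/allP => x /mem_take; apply: (allP ds_digits).
Qed.

Lemma digval_take w : (w <= s)%N -> digval p (take w ds) = ntrunc w %/ p.
Proof.
move=> ws; have dw_lt : (nth 0 ds w < p)%N.
  by apply: (allP ds_digits); rewrite mem_nth // size_ds ltnS.
rewrite /ntrunc (take_nth 0) ?size_ds // digval_rcons divnMDl //.
by rewrite divn_small // addn0.
Qed.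

Lemma Bp_take w : (w <= s)%N -> Bp p (take w.+1 ds) = (ntrunc w - ntrunc w %/ p)%N.
Proof. by move=> ws; rewrite /Bp size_takel ?size_ds // take_takel //= (digval_take w ws). Qed.

Lemma calB_take w : (w <= s)%N ->
  calB p (take w.+1 ds) = [seq m <- iota 1 (ntrunc w) | ~~ (p %| m)].
Proof. by move=> ws; rewrite /calB Bp_take // Bset_iota // prime_gt1. Qed.

Lemma mem_calB_take w j : (w <= s)%N ->
  (j \in calB p (take w.+1 ds)) = [&& (0 < j)%N, (j <= ntrunc w)%N & ~~ (p %| j)].
Proof.
move=> ws; rewrite calB_take // mem_filter mem_iota andbC.
by case: j => [|j]; rewrite //= add1n ltnS.
Qed.

Lemma uniq_calB_take w : (w <= s)%N -> uniq (calB p (take w.+1 ds)).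
Proof. by move=> ws; rewrite calB_take // filter_uniq // iota_uniq. Qed.

(* [z : 'I_n] stands for the integer [z.+1], which lies in [A_p(n, level z)];
   [Cset t] below is the paper's [C_p(n, k)]. *)
Definition level (z : 'I_n) := (s - logn p z.+1)%N.
Definition pfree (z : 'I_n) := (z.+1 %/ p ^ logn p z.+1)%N.

Lemma logn_ord_le (z : 'I_n) : (logn p z.+1 <= s)%N.
Proof.
have le_z : (p ^ logn p z.+1 <= z.+1)%N by apply: dvdn_leq => //; apply: pfactor_dvdnn.
have n_lt : (n < p ^ s.+1)%N by rewrite -size_ds digval_lt.
have : (p ^ logn p z.+1 < p ^ s.+1)%N.
  by apply: leq_ltn_trans le_z (leq_ltn_trans (ltn_ord z) n_lt).
by rewrite ltn_exp2l ?prime_gt1.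
Qed.

Lemma level_le (z : 'I_n) : (level z <= s)%N.
Proof. exact: leq_subr. Qed.

Lemma ord_pfree_level (z : 'I_n) : z.+1 = (pfree z * p ^ (s - level z))%N.
Proof. by rewrite /level subKn ?logn_ord_le // divnK // pfactor_dvdnn. Qed.

Lemma pfree_gt0 (z : 'I_n) : (0 < pfree z)%N.
Proof. by have := ord_pfree_level z; case: (pfree z). Qed.

Lemma pfree_ndvd (z : 'I_n) : ~~ (p %| pfree z).
Proof.
apply/negP => dvd_pz; have logn_pz : (0 < logn p (pfree z))%N.
  by rewrite logn_gt0 mem_primes p_prime pfree_gt0.
have := congr1 (logn p) (ord_pfree_level z).
rewrite lognM ?pfree_gt0 ?expn_gt0 ?p_gt0 // pfactorK // /level subKn ?logn_ord_le //.
lia.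
Qed.

Lemma pfree_le (z : 'I_n) : (pfree z <= ntrunc (level z))%N.
Proof. by rewrite leq_ntrunc ?level_le // -ord_pfree_level. Qed.

Lemma level_pfree_eq (z : 'I_n) j w : (w <= s)%N -> ~~ (p %| j) ->
  z.+1 = (j * p ^ (s - w))%N -> level z = w /\ pfree z = j.
Proof.
move=> ws hj hz; have j_gt0 : (0 < j)%N by case: j hj hz; rewrite ?dvdn0.
have logn_z : logn p z.+1 = (s - w)%N by rewrite hz logn_mul_pexp.
by rewrite /level /pfree logn_z hz mulnK ?expn_gt0 ?p_gt0 //; split=> //; lia.
Qed.

Lemma level_pfree_inj (z y : 'I_n) : level z = level y -> pfree z = pfree y -> z = y.
Proof.
move=> eq_level eq_pfree; apply/val_inj/succn_inj.
by rewrite ord_pfree_level eq_level eq_pfree -ord_pfree_level.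
Qed.

(* Only used to provide a default element of ['I_n]. *)
Hypothesis n_gt0 : (0 < n)%N.

Definition ord_at w j : 'I_n := insubd (Ordinal n_gt0) (j * p ^ (s - w)).-1.

Section OrdAt.
Variables (w j : nat).
Hypotheses (ws : (w <= s)%N) (j_calB : j \in calB p (take w.+1 ds)).

Lemma ord_atE : (ord_at w j).+1 = (j * p ^ (s - w))%N.
Proof.
move: j_calB; rewrite mem_calB_take // => /and3P[j_gt0 j_le _].
have m_gt0 : (0 < j * p ^ (s - w))%N by rewrite muln_gt0 j_gt0 expn_gt0 p_gt0.
rewrite leq_ntrunc // in j_le.
by rewrite val_insubd ifT; lia.
Qed.

Lemma level_ord_at : level (ord_at w j) = w.
Proof.
move: (j_calB); rewrite mem_calB_take // => /and3P[_ _ hj].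
by have [] := level_pfree_eq _ _ _ ws hj ord_atE.
Qed.

Lemma pfree_ord_at : pfree (ord_at w j) = j.
Proof.
move: (j_calB); rewrite mem_calB_take // => /and3P[_ _ hj].
by have [] := level_pfree_eq _ _ _ ws hj ord_atE.
Qed.

End OrdAt.

Lemma big_level (R : Type) (idx : R) (op : Monoid.com_law idx) w (F : nat -> R) :
  (w <= s)%N ->
  \big[op/idx]_(z : 'I_n | level z == w) F (pfree z) =
  \big[op/idx]_(j <- calB p (take w.+1 ds)) F j.
Proof.
move=> ws; rewrite -(big_image _ _ pfree [pred z : 'I_n | level z == w]).
apply/perm_big/uniq_perm.
- rewrite map_inj_in_uniq ?enum_uniq // => z y.
  by rewrite !mem_enum => /eqP lz /eqP ly; apply: level_pfree_inj; rewrite lz.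
- exact: uniq_calB_take.
move=> j; rewrite mem_calB_take //; apply/imageP/idP => [[z /eqP <- ->] | hj].
  by rewrite pfree_gt0 pfree_le pfree_ndvd.
have j_calB : j \in calB p (take w.+1 ds) by rewrite mem_calB_take.
exists (ord_at w j); last by rewrite pfree_ord_at.
by rewrite inE /= level_ord_at.
Qed.

Lemma card_level w : (w <= s)%N -> #|[set z : 'I_n | level z == w]| = Bp p (take w.+1 ds).
Proof.
move=> ws; rewrite -sum1_card (eq_bigl (fun z : 'I_n => level z == w)) => [|z]; last first.
  by rewrite inE.
by rewrite (big_level nat 0%N addn w (fun=> 1%N)) // sum1_size /calB size_Bset ?prime_gt1.
Qed.

Definition Cset t := [set z : 'I_n | (level z <= t)%N].
Definition weight (S : {set 'I_n}) := (\sum_(z in S) level z)%N.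

Lemma big_Cset_level t (G : 'I_n -> nat) :
  (\sum_(z in Cset t) G z = \sum_(w < t.+1) \sum_(z | level z == w) G z)%N.
Proof.
rewrite (partition_big (fun z => inord (level z) : 'I_t.+1) predT) //=.
apply: eq_bigr => w _; apply: eq_bigl => z; rewrite inE.
apply/andP/eqP => [[lz /eqP <-] | lz]; first by rewrite inordK.
split; first by rewrite lz -ltnS ltn_ord.
by apply/eqP/val_inj; rewrite /= inordK lz // ltn_ord.
Qed.

Lemma sum_Cset_level t (G : nat -> nat) : (t <= s)%N ->
  (\sum_(z in Cset t) G (level z) = \sum_(w < t.+1) Bp p (take w.+1 ds) * G w)%N.
Proof.
move=> ts; rewrite big_Cset_level; apply: eq_bigr => w _.
have ws : (w <= s)%N by apply: leq_trans ts; rewrite -ltnS.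
rewrite -card_level // -sum1_card big_distrl /=.
by apply: eq_big => [z | z /eqP ->]; rewrite ?inE ?mul1n.
Qed.

Lemma card_Cset t : (t <= s)%N -> #|Cset t| = ntrunc t.
Proof.
move=> ts; rewrite -sum1_card (sum_Cset_level t (fun=> 1%N) ts).
elim: t ts => [|t IH] ts.
  by rewrite big_ord1 muln1 Bp_take // -digval_take // take0 /digval subn0.
rewrite big_ord_recr /= IH 1?ltnW // muln1 Bp_take // -(digval_take t.+1 ts).
by rewrite addnC subnK // (digval_take t.+1 ts) leq_div.
Qed.

Lemma weight_Cset t : (t <= s)%N ->
  weight (Cset t) = (\sum_(w < t.+1) Bp p (take w.+1 ds) * w)%N.
Proof. exact: (sum_Cset_level t id). Qed.

(* Exchanging the elements of [R] outside [Cset t] for the missing ones of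
   [Cset t] lowers each of their levels by at least one. *)
Lemma weight_Cset_le t (R : {set 'I_n}) : #|R| = #|Cset t| ->
  (weight (Cset t) + #|R :\: Cset t| <= weight R)%N.
Proof.
move=> card_R; rewrite /weight (big_setID R) [X in (_ <= X)%N](big_setID (Cset t)) /=.
rewrite setIC -addnA leq_add2l.
have card_out : #|Cset t :\: R| = #|R :\: Cset t|.
  by apply/eqP; rewrite -(eqn_add2l #|R :&: Cset t|) {1}setIC !cardsID card_R.
have lo : (\sum_(z in Cset t :\: R) level z <= t * #|R :\: Cset t|)%N.
  rewrite -card_out mulnC -sum_nat_const; apply: leq_sum => z.
  by rewrite !inE => /andP[].
have hi : (t.+1 * #|R :\: Cset t| <= \sum_(z in R :\: Cset t) level z)%N.
  rewrite mulnC -sum_nat_const; apply: leq_sum => z.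
  by rewrite !inE -ltnNge => /andP[].
by rewrite mulSn in hi; rewrite addnC (leq_trans _ hi) // leq_add2l.
Qed.

Lemma eq_Cset_weight_le t (R : {set 'I_n}) : #|R| = #|Cset t| ->
  (weight R <= weight (Cset t))%N -> R = Cset t.
Proof.
move=> card_R le_weight; have ge_weight := weight_Cset_le _ _ card_R.
have out0 : #|R :\: Cset t| = 0%N by lia.
by apply/eqP; rewrite eqEcard card_R leqnn andbT -setD_eq0 -cards_eq0 out0.
Qed.

Section OneMore.
Variables (t : nat) (S : {set 'I_n}) (x : 'I_n).
Hypotheses (xS : x \in S) (card_S : #|S| = (#|Cset t|).+1).

Let card_Sx : #|S :\ x| = #|Cset t|.
Proof. by have := cardsD1 x S; rewrite xS card_S add1n => -[]. Qed.

Let weight_S : weight S = (level x + weight (S :\ x))%N.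
Proof. by rewrite /weight (big_setD1 _ xS). Qed.

Lemma weight_Cset_level_le : (weight (Cset t) + level x <= weight S)%N.
Proof. by have := weight_Cset_le _ _ card_Sx; rewrite weight_S; lia. Qed.

Lemma eq_setU1_Cset : weight S = (weight (Cset t) + level x)%N -> S = x |: Cset t.
Proof.
move=> eq_weight; rewrite -(eq_Cset_weight_le _ _ card_Sx) ?setD1K //.
by move: eq_weight; rewrite weight_S; lia.
Qed.

End OneMore.

Lemma exists_level_gt t (S : {set 'I_n}) : #|S| = (#|Cset t|).+1 ->
  exists2 x, x \in S & (t < level x)%N.
Proof.
move=> card_S; have : ~~ (S \subset Cset t).
  by apply/negP => /subset_leq_card; rewrite card_S ltnn.
by case/subsetPn => x xS; rewrite inE -ltnNge; exists x.
Qed.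

Local Open Scope ring_scope.

Let p_neq0 : (p%:R : rat) != 0.
Proof. by rewrite pnatr_eq0 -lt0n. Qed.

Lemma invn_ord (z : 'I_n) :
  ((z.+1)%:R : rat)^-1 = ((pfree z)%:R)^-1 * (p%:R) ^+ level z / (p%:R) ^+ s.
Proof.
have pfree_neq0 : ((pfree z)%:R : rat) != 0 by rewrite pnatr_eq0 -lt0n pfree_gt0.
rewrite ord_pfree_level natrM natrX -[in RHS](subnK (level_le z)) exprD.
by field; rewrite pfree_neq0 !expf_neq0.
Qed.

Lemma prod_invn_set (S : {set 'I_n}) :
  \prod_(z in S) ((z.+1)%:R : rat)^-1 =
  (\prod_(z in S) ((pfree z)%:R)^-1) * (p%:R) ^+ weight S / (p%:R) ^+ (#|S| * s).
Proof.
rewrite (eq_bigr _ (fun z _ => invn_ord z)) !big_split /= prodrXr prodr_const.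
by rewrite exprVn mulnC exprM.
Qed.

Lemma Pip_Cset t : (t <= s)%N -> Pip p n s t = \prod_(z in Cset t) ((pfree z)%:R : rat)^-1.
Proof.
move=> ts; rewrite /Pip big_add1 /= big_mkord; apply: eq_big => [z | z _].
  by rewrite inE /level; have := logn_ord_le z; lia.
rewrite /pfree natr_div ?pfactor_dvdnn //.
by rewrite unitfE pnatr_eq0 -lt0n expn_gt0 p_gt0.
Qed.

Lemma ltr_pfree_level (y z : 'I_n) :
  ((pfree y)%:R / (p ^ level y)%:R < (pfree z)%:R / (p ^ level z)%:R :> rat) = (y < z)%N.
Proof.
by rewrite (ltr_div_expn _ _ _ _ _ _ p_gt0 (level_le y) (level_le z)) -!ord_pfree_level ltnS.
Qed.

Lemma weight_increasing K (g : {ffun 'I_K -> 'I_n}) : increasing g ->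
  weight [set g i | i : 'I_K] = (\sum_i level (g i))%N.
Proof. by move=> g_incr; rewrite /weight big_imset // => i j _ _; apply: increasing_inj. Qed.

Section Digits.
Variables (es : seq nat) (t : nat).
Hypotheses (size_es : size es = t.+1) (t_lt_s : (t < s)%N) (ds_es : take t.+1 ds = es).

Local Notation k := (digval p es).+1.
Local Notation U := (Up p es).

Let t_le_s : (t <= s)%N := ltnW t_lt_s.

Lemma digval_es_Cset : digval p es = #|Cset t|.
Proof. by rewrite card_Cset // -ds_es. Qed.

Lemma Up_weight : U = (weight (Cset t) + t.+1)%N.
Proof.
rewrite -ds_es /Up size_takel ?size_ds // weight_Cset //.
by congr (_ + _)%N; apply: eq_bigr => w _; rewrite take_takel.
Qed.

Lemma Up_le_weight (S : {set 'I_n}) : #|S| = k -> (U <= weight S)%N.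
Proof.
rewrite digval_es_Cset => card_S; have [x xS lt_x] := exists_level_gt _ _ card_S.
by have := weight_Cset_level_le _ _ _ xS card_S; rewrite Up_weight; lia.
Qed.

Section Layer.
Variable v : nat.
Hypothesis tv_lt_s : (t + v < s)%N.

Local Notation a := (take (t + v + 1) ds).
Local Notation digit_level := 'I_(size a).
Local Notation pfree_bound := 'I_(p ^ (size a).+1).

Let size_a : size a = (t + v).+1.
Proof. by rewrite size_takel addn1 // size_ds ltnS ltnW. Qed.

Let level_le_tv (w : digit_level) : (w <= t + v)%N.
Proof. by rewrite -ltnS -size_a. Qed.

Let take_a (w : digit_level) : take w.+1 a = take w.+1 ds.
Proof. by rewrite take_takel //; have := level_le_tv w; lia. Qed.

Let level_le_s (w : digit_level) : (w <= s)%N.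
Proof. exact: leq_trans (level_le_tv w) (ltnW tv_lt_s). Qed.

(* A set of weight [U + v] containing an element of level [> t + v] is [Cset t]
   plus one element of level exactly [t + v + 1]. *)
Lemma sum_sets_with_high_level :
  \sum_(S : {set 'I_n} | [&& #|S| == k, weight S == (U + v)%N
                          & ~~ [forall z in S, level z <= t + v]%N])
     \prod_(z in S) ((pfree z)%:R : rat)^-1
  = Pip p n s t * \sum_(j <- calB p (take (t + v + 2) ds)) (j%:R)^-1.
Proof.
set A := [set z : 'I_n | level z == (t + v).+1].
have notin_Cset x : x \in A -> x \notin Cset t.
  by rewrite !inE => /eqP ->; rewrite -ltnNge; lia.
rewrite (eq_bigl (mem [set x |: Cset t | x in A])) => [|S]; last first.
  rewrite digval_es_Cset Up_weight /=.
  apply/and3P/imsetP => [[/eqP card_S /eqP w_S /forall_inPn[x xS /negbTE lt_x]] | [x xA ->]].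
    have := weight_Cset_level_le _ _ _ xS card_S; rewrite w_S => le_x.
    have level_x : level x = (t + v).+1 by lia.
    by exists x; rewrite ?inE ?level_x // (eq_setU1_Cset _ _ _ xS card_S) // w_S level_x; lia.
  have x_nC := notin_Cset x xA; move: xA; rewrite inE => /eqP level_x.
  split; first by rewrite cardsU1 x_nC.
    by rewrite /weight big_setU1 //= -/(weight _) level_x; apply/eqP; lia.
  by apply/forall_inPn; exists x; rewrite ?setU11 // level_x -ltnNge.
rewrite big_imset /= => [|x y xA yA /setP/(_ x)]; last first.
  rewrite setU11 in_setU1 => /esym/orP[/eqP // | xC].
  by have := notin_Cset x xA; rewrite xC.
rewrite (eq_bigr (fun x => ((pfree x)%:R)^-1 * \prod_(z in Cset t) ((pfree z)%:R : rat)^-1));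
  last by move=> x xA; rewrite big_setU1 //= notin_Cset.
rewrite -big_distrl /= mulrC Pip_Cset //; congr (_ * _).
rewrite addn2 -(big_level _ _ _ (t + v).+1 (fun j => (j%:R)^-1)) //.
by apply: eq_bigl => z; rewrite inE.
Qed.

(* The tuples summed in [Hprime] encode the increasing [k]-tuples of elements
   of level at most [t + v]. *)
Definition admissible (vv : {ffun 'I_k -> digit_level}) (js : {ffun 'I_k -> pfree_bound}) :=
  [forall i : 'I_k, (js i : nat) \in calB p (take (vv i).+1 a)] &&
  [forall i : 'I_k, forall j : 'I_k, (i < j)%N ==>
     ((js i)%:R / (p ^ vv i)%:R < (js j)%:R / (p ^ vv j)%:R :> rat)].

Definition layer_ord (vv : {ffun 'I_k -> digit_level}) (js : {ffun 'I_k -> pfree_bound}) :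
  {ffun 'I_k -> 'I_n} := [ffun i => ord_at (vv i) (js i)].

Section Admissible.
Variables (vv : {ffun 'I_k -> digit_level}) (js : {ffun 'I_k -> pfree_bound}).
Hypothesis vv_js : admissible vv js.

Let js_calB i : (js i : nat) \in calB p (take (vv i).+1 ds).
Proof. by case/andP: vv_js => /forallP/(_ i) + _; rewrite take_a. Qed.

Lemma level_layer_ord i : level (layer_ord vv js i) = vv i.
Proof. by rewrite ffunE level_ord_at. Qed.

Lemma pfree_layer_ord i : pfree (layer_ord vv js i) = js i.
Proof. by rewrite ffunE pfree_ord_at. Qed.

Lemma increasing_layer_ord : increasing (layer_ord vv js).
Proof.
apply/increasingP => i j lt_ij; case/andP: vv_js => _ /forallP/(_ i)/forallP/(_ j).
by rewrite lt_ij -ltr_pfree_level !level_layer_ord !pfree_layer_ord.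
Qed.

End Admissible.

Lemma layer_ord_inj vv1 js1 vv2 js2 : admissible vv1 js1 -> admissible vv2 js2 ->
  layer_ord vv1 js1 = layer_ord vv2 js2 -> vv1 = vv2 /\ js1 = js2.
Proof.
move=> adm1 adm2 eq_ord; split; apply/ffunP => i; apply: ord_inj.
  by rewrite -(level_layer_ord _ _ adm1) -(level_layer_ord _ _ adm2) eq_ord.
by rewrite -(pfree_layer_ord _ _ adm1) -(pfree_layer_ord _ _ adm2) eq_ord.
Qed.

Lemma layer_ord_onto (g : {ffun 'I_k -> 'I_n}) :
  increasing g -> [forall i, level (g i) <= t + v]%N ->
  exists vv js, admissible vv js /\ layer_ord vv js = g.
Proof.
move=> g_incr /forallP g_low.
have level_lt i : (level (g i) < size a)%N by rewrite size_a ltnS g_low.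
have pfree_lt i : (pfree (g i) < p ^ (size a).+1)%N.
  apply: leq_ltn_trans (pfree_le _) (leq_trans (ntrunc_lt _ (level_le _)) _).
  by rewrite leq_exp2l ?prime_gt1 // ltnS ltnW.
pose vv := [ffun i => Ordinal (level_lt i)]; pose js := [ffun i => Ordinal (pfree_lt i)].
have js_calB i : (js i : nat) \in calB p (take (vv i).+1 a).
  by rewrite take_a !ffunE mem_calB_take ?level_le // pfree_gt0 pfree_le pfree_ndvd.
have vv_js : admissible vv js.
  apply/andP; split; apply/forallP => i //; apply/forallP => j; apply/implyP => lt_ij.
  by rewrite !ffunE /= ltr_pfree_level; move/increasingP: g_incr; apply.
exists vv, js; split => //; apply/ffunP => i; apply: level_pfree_inj.
  by rewrite (level_layer_ord _ _ vv_js) ffunE.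
by rewrite (pfree_layer_ord _ _ vv_js) ffunE.
Qed.

Lemma sum_sets_with_low_levels :
  \sum_(S : {set 'I_n} | [&& #|S| == k, weight S == (U + v)%N
                          & [forall z in S, level z <= t + v]%N])
     \prod_(z in S) ((pfree z)%:R : rat)^-1
  = Hprime p es a.
Proof.
pose P S := (weight S == (U + v)%N) && [forall z in S, level z <= t + v]%N.
pose A := [set x : {ffun 'I_k -> digit_level} * {ffun 'I_k -> pfree_bound}
             | (\sum_i (x.1 i : nat) == U + v)%N && admissible x.1 x.2].
rewrite (big_card_set_increasing _ _ _ _ _ P).
rewrite /Hprime /=.
have -> : ((size a).-1 - (size es).-1)%N = v by rewrite size_a size_es /= addKn.
rewrite pair_big_dep /=.
transitivity (\sum_(g in [set layer_ord x.1 x.2 | x in A])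
                \prod_i ((pfree (g i))%:R : rat)^-1).
  apply: eq_big => [g | g /andP[g_incr _]]; last first.
    by rewrite big_imset // => i j _ _; apply: increasing_inj.
  apply/andP/imsetP => [[g_incr] | [x /[!inE] /andP[/eqP sum_vv adm] ->]].
    rewrite /P weight_increasing // => /andP[/eqP sum_level /forall_inP low].
    have [|vv [js [adm eq_g]]] := layer_ord_onto _ g_incr.
      by apply/forallP => i; apply: low; apply: imset_f.
    exists (vv, js); rewrite ?eq_g // inE adm andbT -sum_level; apply/eqP/eq_bigr => i _.
    by rewrite -eq_g (level_layer_ord _ _ adm).
  have ord_incr := increasing_layer_ord _ _ adm.
  split=> //; rewrite /P weight_increasing //; apply/andP; split.
    by rewrite -sum_vv; apply/eqP/eq_bigr => i _; rewrite (level_layer_ord _ _ adm).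
  by apply/forall_inP => _ /imsetP[i _ ->]; rewrite (level_layer_ord _ _ adm) level_le_tv.
rewrite big_imset => [|x y]; last first.
  rewrite !inE => /andP[_ adm_x] /andP[_ adm_y].
  case/(layer_ord_inj _ _ _ _ adm_x adm_y) => eq1 eq2.
  by rewrite [x]surjective_pairing [y]surjective_pairing eq1 eq2.
apply: eq_big => [x | x]; first by rewrite inE.
by rewrite inE => /andP[_ adm_x]; apply: eq_bigr => i _; rewrite (pfree_layer_ord _ _ adm_x).
Qed.

Lemma sum_sets_of_weight :
  \sum_(S : {set 'I_n} | (#|S| == k) && (weight S == U + v)%N)
     \prod_(z in S) ((z.+1)%:R : rat)^-1
  = Hp p es n s (take (t + v + 2) ds) * (p%:R) ^ (v%:Z - (k * s)%:Z + U%:Z).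
Proof.
rewrite (eq_bigr (fun S : {set 'I_n} => \prod_(z in S) ((pfree z)%:R : rat)^-1
                           * ((p%:R) ^+ (U + v) / (p%:R) ^+ (k * s)))); last first.
  by move=> S /andP[/eqP card_S /eqP w_S]; rewrite prod_invn_set card_S w_S mulrA.
rewrite -big_distrl /= exprz_natBD //; congr (_ * _).
have size_a2 : size (take (t + v + 2) ds) = (t + v + 2)%N.
  by rewrite size_takel // size_ds; lia.
rewrite (bigID (fun S : {set 'I_n} => [forall z in S, level z <= t + v]%N)) /=.
rewrite /Hp size_a2 size_es.
have -> : (t + v + 2).-1 = (t + v + 1)%N by rewrite addn2 addn1.
rewrite take_takel ?leq_add2l // -sum_sets_with_low_levels -sum_sets_with_high_level //.
by congr (_ + _); apply: eq_bigl => S; rewrite andbA.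
Qed.

End Layer.

Lemma bigO_sets_of_large_weight :
  bigOp p ((s - t)%:Z - (k * s)%:Z + U%:Z)
    (\sum_(S : {set 'I_n} | (#|S| == k) && (U + (s - t) <= weight S)%N)
       \prod_(z in S) ((z.+1)%:R : rat)^-1).
Proof.
set e := (U + (s - t))%N.
rewrite (eq_bigr (fun S : {set 'I_n} =>
    \prod_(z in S) ((pfree z)%:R : rat)^-1 * (p%:R) ^+ (weight S - e)
    * (p%:R) ^+ e / (p%:R) ^+ (k * s))); last first.
  move=> S /andP[/eqP card_S le_w]; rewrite prod_invn_set card_S -!mulrA; congr (_ * _).
  by rewrite mulrA -exprD subnK.
rewrite -!big_distrl /=; apply: p_integral_bigOp => //; last by rewrite /e PoszD; lia.
apply: p_integral_sum => // S _; apply: p_integralM => //.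
  by apply: p_integral_prod => // z _; apply: p_integral_invn; apply: pfree_ndvd.
by rewrite -natrX; apply: p_integral_nat.
Qed.

Lemma Hnk_expansion :
  bigOp p ((s - t)%:Z - (k * s)%:Z + U%:Z)
    (Hnk n k - \sum_(v < s - t)
       Hp p es n s (take (t + v + 2) ds) * (p%:R) ^ (v%:Z - (k * s)%:Z + U%:Z)).
Proof.
have layer_lt (v : 'I_(s - t)) : (t + v < s)%N by have := ltn_ord v; lia.
rewrite /Hnk (big_split_layers _ _ _ _ _ weight _ U (s - t)) => [|S /eqP]; last first.
  exact: Up_le_weight.
rewrite (eq_bigr _ (fun (v : 'I_(s - t)) _ => sum_sets_of_weight v (layer_lt v))) /=.
rewrite [X in bigOp _ _ X]addrAC subrr add0r.
exact: bigO_sets_of_large_weight.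
Qed.

End Digits.

End Levels.

Local Open Scope ring_scope.

Theorem lemma3p2 (p : nat) (es ds : seq nat) (t s : nat) :
  prime p ->
  size es = t.+1 -> size ds = s.+1 ->
  all (fun x => x < p)%N es -> all (fun x => x < p)%N ds ->
  head 0%N es != 0%N -> head 0%N ds != 0%N ->
  (2 <= (digval p es).+1)%N ->
  (t.+1 <= s)%N ->
  take t.+1 ds = es ->
  let n := digval p ds in
  let k := (digval p es).+1 in
  bigOp p ((s - t)%:Z - (k * s)%:Z + (Up p es)%:Z)
    (Hnk n k
     - \sum_(v < s - t)
         Hp p es n s (take (t + v + 2) ds)
         * (p%:R : rat) ^ (v%:Z - (k * s)%:Z + (Up p es)%:Z)).
Proof.
(* The constraints on [es] and [k] are implied by [take t.+1 ds = es] or unneeded. *)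
move=> p_prime size_es size_ds _ ds_digits _ ds_head _ t_lt_s ds_es n k.
have n_gt0 : (0 < n)%N := digval_gt0 _ _ (prime_gt0 p_prime) ds_head.
exact: Hnk_expansion.
Qed.
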